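(* Let $A_1,A_2,B,D\in\mathbb R^{n\times n}$ and $K,L_0,L_1,L_2,\delta>0$ satisfy: (i) $A_1+A_1^\top$, $A_2+A_2^\top$ and $B+B^\top$ are positive semidefinite; (ii) $\|A_1\|_\sigma,\|A_2\|_\sigma,\|B\|_\sigma\le L_0\le 1/106$; (iii) $D+D^\top\preceq L_1(B^\top B+A_1A_1^\top)+K\delta^2 I$; (iv) $D^\top D\preceq L_2 B^\top B$; (v) $10L_0+\frac{4L_2}{L_0^2}+5L_1\le 24/50$; (vi) $\|X-Y\|_\sigma\le\delta$ for any two $X,Y\in\{A_1,A_2,B\}$. Then $$\|I-A_1+A_2B+D\|_\sigma\le\sqrt{1+(400+K)\delta^2}.$$
   Context: $\|\cdot\|_\sigma$ is the spectral norm; for symmetric matrices $S\preceq T$ means $T-S$ is positive semidefinite. *)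

From HB Require Import structures.
From mathcomp Require Import all_boot all_order all_algebra.
From mathcomp Require Import boolp classical_sets reals.
Set Implicit Arguments. Unset Strict Implicit. Unset Printing Implicit Defensive.
Import Order.TTheory GRing.Theory Num.Theory.
Local Open Scope ring_scope.
Local Open Scope classical_set_scope.

Definition vnorm (R : realType) (n : nat) (x : 'cV[R]_n) : R :=
  Num.sqrt (\sum_(i < n) x i 0 ^+ 2).

Definition specnorm (R : realType) (n : nat) (M : 'M[R]_n) : R :=
  sup [set vnorm (M *m x) | x in [set x : 'cV[R]_n | vnorm x <= 1]].

Definition psd (R : realType) (n : nat) (M : 'M[R]_n) : Prop :=
  forall x : 'cV[R]_n, 0 <= (x^T *m M *m x) 0 0.

Definition loewner_le (R : realType) (n : nat) (S T : 'M[R]_n) : Prop :=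
  psd (T - S).

(* Fix x and put u = A1 x, v = A1^T x, b = B x, y = A2 b and d = D x, so that
   the image of x is x - u + y + d.  In |x - u + y + d|^2 the term |u|^2
   cancels against the part 2 <v, u> = |u + v|^2 - |u|^2 - |v|^2 of
   2 <x, y> = 2 <A2^T x, b>, which leaves |x|^2 - 2 <x, u> + |u + v|^2 - |v|^2
   plus terms that are of size delta^2 |x|^2 or are absorbed by Young's
   inequality into small multiples of |u|^2 <= 4 |u + v|^2 + 4/3 |v|^2.
   As A1 + A1^T is positive semidefinite with norm at most 2 L0,
   |u + v|^2 <= 4 L0 <x, u>, so -2 <x, u> pays for all the |u + v|^2 terms
   and -|v|^2 for the |v|^2 terms. *)

From mathcomp Require Import all_boot all_order all_algebra.
From mathcomp Require Import classical_sets reals.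
From mathcomp Require Import ring lra.

Set Implicit Arguments.
Unset Strict Implicit.
Unset Printing Implicit Defensive.

Import Order.TTheory GRing.Theory Num.Theory.
Local Open Scope ring_scope.

Definition dot (R : comPzRingType) (n : nat) (a b : 'cV[R]_n) : R := (a^T *m b) 0 0.

Notation normsq a := (dot a a).

Section InnerProduct.
Variables (R : comPzRingType) (n : nat).
Implicit Types (a b c : 'cV[R]_n) (M : 'M[R]_n).

Lemma dotE a b : dot a b = \sum_(i < n) a i 0 * b i 0.
Proof. by rewrite /dot mxE; apply: eq_bigr => i _; rewrite mxE. Qed.

Lemma dotC a b : dot a b = dot b a.
Proof. by rewrite !dotE; apply: eq_bigr => i _; rewrite mulrC. Qed.

Lemma dot0l a : dot 0 a = 0.
Proof. by rewrite /dot linear0 mul0mx mxE. Qed.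

Lemma dotDl a b c : dot (a + b) c = dot a c + dot b c.
Proof. by rewrite /dot linearD mulmxDl mxE. Qed.

Lemma dotNl a b : dot (- a) b = - dot a b.
Proof. by rewrite /dot linearN mulNmx mxE. Qed.

Lemma dotZl k a b : dot (k *: a) b = k * dot a b.
Proof. by rewrite /dot linearZ -scalemxAl mxE. Qed.

Lemma dotBl a b c : dot (a - b) c = dot a c - dot b c.
Proof. by rewrite dotDl dotNl. Qed.

Lemma dotDr a b c : dot a (b + c) = dot a b + dot a c.
Proof. by rewrite dotC dotDl !(dotC a). Qed.

Lemma dotNr a b : dot a (- b) = - dot a b.
Proof. by rewrite dotC dotNl dotC. Qed.

Lemma dotZr k a b : dot a (k *: b) = k * dot a b.
Proof. by rewrite dotC dotZl dotC. Qed.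

Lemma dotBr a b c : dot a (b - c) = dot a b - dot a c.
Proof. by rewrite dotDr dotNr. Qed.

Lemma normsqN a : normsq (- a) = normsq a.
Proof. by rewrite dotNl dotNr opprK. Qed.

Lemma normsqD a b : normsq (a + b) = normsq a + 2 * dot a b + normsq b.
Proof. by rewrite dotDl !dotDr (dotC b a); ring. Qed.

Lemma dot_mulmxl M a b : dot (M *m a) b = dot a (M^T *m b).
Proof. by rewrite /dot trmx_mul mulmxA. Qed.

Lemma dot_mulmxr M a b : dot a (M *m b) = dot (M^T *m a) b.
Proof. by rewrite dot_mulmxl trmxK. Qed.

Lemma dot_mulmx_addtr M a : dot a ((M + M^T) *m a) = 2 * dot a (M *m a).
Proof.
by rewrite mulmxDl dotDr (dot_mulmxr M^T) trmxK (dotC _ a) -mulr2n mulr_natl.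
Qed.

Lemma dot_mulmx_gram M a : dot a ((M^T *m M) *m a) = normsq (M *m a).
Proof. by rewrite -mulmxA dot_mulmxr trmxK. Qed.

End InnerProduct.

Section RealInnerProduct.
Variables (R : realFieldType) (n : nat).
Implicit Types a b : 'cV[R]_n.

Lemma normsq_ge0 a : 0 <= normsq a.
Proof. by rewrite dotE sumr_ge0 // => i _; rewrite -expr2 sqr_ge0. Qed.

Lemma normsq_eq0 a : (normsq a == 0) = (a == 0).
Proof.
apply/idP/eqP => [|->]; last by rewrite dot0l.
rewrite dotE psumr_eq0 => [/allP a0|i _]; last by rewrite -expr2 sqr_ge0.
apply/matrixP => i j; rewrite ord1 mxE.
by have /implyP/(_ isT) := a0 i (mem_index_enum i); rewrite mulf_eq0 orbb => /eqP.
Qed.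

Lemma dot_young k a b : 0 < k -> 2 * dot a b <= k * normsq a + normsq b / k.
Proof.
move=> k_gt0; have := normsq_ge0 (k *: a - b).
rewrite dotBl !dotBr !dotZl !dotZr (dotC b) => h.
have kK : k * (normsq b / k) = normsq b by rewrite mulrCA divff ?gt_eqF ?mulr1.
by rewrite -(ler_pM2l k_gt0) mulrDr kK; lra.
Qed.

Lemma normsqD_le k a b : 0 < k ->
  normsq (a + b) <= (1 + k) * normsq a + (1 + k^-1) * normsq b.
Proof. by move=> k_gt0; have := dot_young a b k_gt0; rewrite normsqD; lra. Qed.

End RealInnerProduct.

Section SpectralNorm.
Variables (R : realType) (n : nat).
Implicit Types (x : 'cV[R]_n) (M : 'M[R]_n).

Lemma vnormE x : vnorm x = Num.sqrt (normsq x).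
Proof.
by rewrite /vnorm dotE; congr Num.sqrt; apply: eq_bigr => i _; rewrite expr2.
Qed.

Lemma vnorm_le1 x : (vnorm x <= 1) = (normsq x <= 1).
Proof. by rewrite vnormE -{1}sqrtr1 ler_sqrt. Qed.

Lemma specnorm_has_sup M :
  has_sup [set vnorm (M *m x) | x in [set x | vnorm x <= 1]].
Proof.
split; first by exists (vnorm (M *m 0)), 0 => //=; rewrite vnorm_le1 dot0l ler01.
exists (Num.sqrt (\sum_i (\sum_j `|M i j|) ^+ 2)) => _ [x /= + <-].
rewrite vnorm_le1 => x1; rewrite /vnorm ler_sqrt; last first.
  by apply: sumr_ge0 => i _; apply: sqr_ge0.
have xj1 j : `|x j 0| <= 1.
  rewrite -(expr_le1 (n := 2)) // real_normK ?num_real //; apply: le_trans x1.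
  rewrite dotE (bigD1 j) //= -expr2 lerDl.
  by apply: sumr_ge0 => k _; rewrite -expr2 sqr_ge0.
apply: ler_sum => i _.
rewrite -real_normK ?num_real // ler_sqr ?nnegrE ?sumr_ge0 //.
rewrite mxE; apply: le_trans (ler_norm_sum _ _ _) _; apply: ler_sum => j _.
by rewrite normrM ler_piMr.
Qed.

Lemma vnorm_mulmx_le M x : vnorm x <= 1 -> vnorm (M *m x) <= specnorm M.
Proof. by move=> x1; apply: sup_upper_bound (specnorm_has_sup M) _ _; exists x. Qed.

Lemma specnorm_ge0 M : 0 <= specnorm M.
Proof.
have v01 : vnorm (0 : 'cV[R]_n) <= 1 by rewrite vnorm_le1 dot0l ler01.
exact: le_trans (sqrtr_ge0 _) (vnorm_mulmx_le M v01).
Qed.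

Lemma normsq_mulmx_le M L x :
  specnorm M <= L -> normsq (M *m x) <= L ^+ 2 * normsq x.
Proof.
move=> ML; have L_ge0 := le_trans (specnorm_ge0 M) ML.
have [->|x_neq0] := eqVneq x 0; first by rewrite mulmx0 dot0l mulr0.
have t_gt0 : 0 < normsq x by rewrite lt_def normsq_eq0 x_neq0 normsq_ge0.
pose k := (Num.sqrt (normsq x))^-1.
have k2 : k ^+ 2 = (normsq x)^-1 by rewrite exprVn sqr_sqrtr // ltW.
have x1 : vnorm (k *: x) <= 1.
  by rewrite vnorm_le1 dotZl dotZr mulrA -expr2 k2 mulVf ?gt_eqF.
have := le_trans (vnorm_mulmx_le M x1) ML.
rewrite -scalemxAr vnormE dotZl dotZr mulrA -expr2 k2.
rewrite -[L in _ <= L](ger0_norm L_ge0) -sqrtr_sqr ler_sqrt ?sqr_ge0 //.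
by rewrite mulrC ler_pdivrMr // mulrC.
Qed.

Lemma normsq_trmx_mulmx_le M L x : 0 < L ->
  specnorm M <= L -> normsq (M^T *m x) <= L ^+ 2 * normsq x.
Proof.
move=> L_gt0 ML; set g := normsq (M^T *m x).
have h1 := dot_young x (M *m (M^T *m x)) (exprn_gt0 2 L_gt0).
have h2 : normsq (M *m (M^T *m x)) / L ^+ 2 <= g.
  by rewrite ler_pdivrMr ?exprn_gt0 // mulrC; apply: normsq_mulmx_le.
by rewrite dot_mulmxr -/g in h1; lra.
Qed.

Lemma specnorm_le_sqrt M c : 0 <= c ->
  (forall x, normsq (M *m x) <= c * normsq x) -> specnorm M <= Num.sqrt c.
Proof.
move=> c_ge0 Mc; apply: ge_sup.
  by exists (vnorm (M *m 0)), 0 => //=; rewrite vnorm_le1 dot0l ler01.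
move=> _ [x /= + <-]; rewrite vnorm_le1 vnormE ler_sqrt // => x1.
by apply: le_trans (Mc x) _; rewrite ler_piMr.
Qed.

End SpectralNorm.

Section Semidefinite.
Variables (R : realType) (n : nat).
Implicit Types (x : 'cV[R]_n) (A B D M Q S T : 'M[R]_n).

Lemma psd_dot_ge0 M x : psd M -> 0 <= dot x (M *m x).
Proof. by move/(_ x); rewrite -mulmxA. Qed.

Lemma loewner_le_dot S T x : loewner_le S T -> dot x (S *m x) <= dot x (T *m x).
Proof. by move/(psd_dot_ge0 x); rewrite mulmxBl dotBr subr_ge0. Qed.

Lemma psd_addtr_dot_ge0 A x : psd (A + A^T) -> 0 <= dot x (A *m x).
Proof. by move/(psd_dot_ge0 x); rewrite dot_mulmx_addtr pmulr_rge0. Qed.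

(* Equivalently c Q - Q^2 is positive semidefinite; test Q against c x - Q x. *)
Lemma sym_psd_normsq_le Q c x : 0 < c -> Q^T = Q -> psd Q ->
    (forall z, normsq (Q *m z) <= c ^+ 2 * normsq z) ->
  normsq (Q *m x) <= c * dot x (Q *m x).
Proof.
move=> c_gt0 QT hQ Qc; set g := normsq (Q *m x).
have QQx : dot x (Q *m (Q *m x)) = g by rewrite dot_mulmxr QT.
have h0 := psd_dot_ge0 (c *: x - Q *m x) hQ.
rewrite mulmxBr -scalemxAr dotBl !dotBr !dotZl !dotZr QQx -/g in h0.
have h1 := dot_young (Q *m x) (Q *m (Q *m x)) c_gt0.
have h2 : normsq (Q *m (Q *m x)) / c <= c * g.
  by rewrite ler_pdivrMr // mulrAC -expr2 Qc.
by rewrite -(ler_pM2l c_gt0); rewrite -/g in h1; lra.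
Qed.

Lemma normsq_mulmx_addtr_le A L x : 0 < L -> psd (A + A^T) -> specnorm A <= L ->
  normsq ((A + A^T) *m x) <= 4 * L * dot x (A *m x).
Proof.
move=> L_gt0 hA AL.
have AAT_le z : normsq ((A + A^T) *m z) <= (2 * L) ^+ 2 * normsq z.
  rewrite mulmxDl; have := normsqD_le (A *m z) (A^T *m z) ltr01.
  have := normsq_mulmx_le z AL; have := normsq_trmx_mulmx_le z L_gt0 AL.
  rewrite invr1 exprMn; lra.
have sym : (A + A^T)^T = A + A^T by rewrite linearD /= trmxK addrC.
have := sym_psd_normsq_le x (mulr_gt0 (ltr0Sn _ 1) L_gt0) sym hA AAT_le.
by rewrite dot_mulmx_addtr; lra.
Qed.

Lemma loewner_addtr_dot_le A B D L c x :
    loewner_le (D + D^T) (L *: (B^T *m B + A *m A^T) + c%:M) ->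
  2 * dot x (D *m x) <= L * (normsq (B *m x) + normsq (A^T *m x)) + c * normsq x.
Proof.
have AAT : A *m A^T = A^T^T *m A^T by rewrite trmxK.
rewrite AAT => /(loewner_le_dot x).
rewrite dot_mulmx_addtr mulmxDl -scalemxAl mul_scalar_mx.
by rewrite dotDr !dotZr mulmxDl dotDr !dot_mulmx_gram.
Qed.

Lemma loewner_gram_normsq_le B D L x :
    loewner_le (D^T *m D) (L *: (B^T *m B)) ->
  normsq (D *m x) <= L * normsq (B *m x).
Proof. by move/(loewner_le_dot x); rewrite -scalemxAl dotZr !dot_mulmx_gram. Qed.

End Semidefinite.

(* The vectors play the roles of the header, with w = A2^T x; the
   denominators 25, 10000 and 10 are the bounds on 4 L0, on L0^2 and L2, and
   on L1 from lemma13_parameter_bounds. *)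
Lemma normsq_update_le (R : realFieldType) (n : nat) (x u v w b y d : 'cV[R]_n)
    (E F : R) :
    0 <= dot x u -> normsq (u + v) <= dot x u / 25 ->
    normsq (b - u) <= E -> normsq (w - v) <= E ->
    dot x y = dot w b ->
    normsq y <= normsq b / 10000 -> normsq d <= normsq b / 10000 ->
    2 * dot x d <= (normsq b + normsq v) / 10 + F ->
  normsq (x - u + y + d) <= normsq x + 400 * E + F.
Proof.
move=> xu_ge0 uv_le bu_le wv_le xy_eq y_le d_le xd_le.
have expand : normsq (x - u + y + d) =
    normsq x - 2 * dot x u + normsq u + 2 * dot x y + 2 * dot x d
    - 2 * dot u y - 2 * dot u d + normsq y + 2 * dot y d + normsq d.
  by rewrite -addrA !normsqD normsqN dotDl !dotDr !dotNl dotNr; ring.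
have xy_split : dot x y = dot v u + dot (b - u) v + dot (w - v) b.
  by rewrite xy_eq !dotBl (dotC v b) (dotC u v); ring.
have vu_eq : 2 * dot v u = normsq (u + v) - normsq u - normsq v.
  by rewrite normsqD (dotC u v); ring.
have b_le : normsq b <= 2 * normsq u + 2 * E.
  have := normsqD_le u (b - u) ltr01; rewrite addrC subrK invr1; lra.
have u_le : normsq u <= 4 * normsq (u + v) + 4 / 3 * normsq v.
  have := normsqD_le (u + v) (- v) (ltr0Sn _ 2); rewrite addrK normsqN; lra.
have := dot_young (b - u) v (ltr0Sn _ 9).
have := dot_young (w - v) b (ltr0Sn _ 9).
have := dot_young y (- u) (ltr0Sn _ 19).
have := dot_young d (- u) (ltr0Sn _ 19).
have := dot_young y d ltr01.
have := normsq_ge0 v; have := normsq_ge0 (b - u).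
rewrite !normsqN !dotNr (dotC y u) (dotC d u) expand xy_split; lra.
Qed.

Lemma lemma13_parameter_bounds (R : realFieldType) (L0 L1 L2 : R) :
    0 < L0 -> 0 < L1 -> 0 < L2 -> L0 <= 1 / 106%:R ->
    10%:R * L0 + 4%:R * L2 / L0 ^+ 2 + 5%:R * L1 <= 24%:R / 50%:R ->
  [/\ 4 * L0 <= 25^-1, L0 ^+ 2 <= 10000^-1, L2 <= 10000^-1 & L1 <= 10^-1].
Proof.
move=> L0_gt0 L1_gt0 L2_gt0 L0_le hv.
have L0sq_gt0 : 0 < L0 ^+ 2 := exprn_gt0 2 L0_gt0.
have L0sq_le : L0 ^+ 2 <= 1 / 11236.
  have := ler_pM (ltW L0_gt0) (ltW L0_gt0) L0_le L0_le; rewrite -expr2; lra.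
have L2_le : 4 * L2 <= 24 / 50 * L0 ^+ 2 by rewrite -ler_pdivrMr //; lra.
have : 0 <= 4%:R * L2 / L0 ^+ 2 by rewrite divr_ge0 ?mulr_ge0 // ltW.
split; lra.
Qed.

Theorem lemma13 (R : realType) (n : nat) (A1 A2 B D : 'M[R]_n)
  (K L0 L1 L2 delta : R)
  (hK : 0 < K) (hL0 : 0 < L0) (hL1 : 0 < L1) (hL2 : 0 < L2) (hdelta : 0 < delta)
  (hA1 : psd (A1 + A1^T)) (hA2 : psd (A2 + A2^T)) (hB : psd (B + B^T))
  (nA1 : specnorm A1 <= L0) (nA2 : specnorm A2 <= L0) (nB : specnorm B <= L0)
  (hL0small : L0 <= 1 / 106%:R)
  (hD1 : loewner_le (D + D^T)
           (L1 *: (B^T *m B + A1 *m A1^T) + (K * delta ^+ 2)%:M))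
  (hD2 : loewner_le (D^T *m D) (L2 *: (B^T *m B)))
  (hv : 10%:R * L0 + 4%:R * L2 / L0 ^+ 2 + 5%:R * L1 <= 24%:R / 50%:R)
  (h12 : specnorm (A1 - A2) <= delta) (h21 : specnorm (A2 - A1) <= delta)
  (h1B : specnorm (A1 - B) <= delta) (hB1 : specnorm (B - A1) <= delta)
  (h2B : specnorm (A2 - B) <= delta) (hB2 : specnorm (B - A2) <= delta) :
  specnorm (1%:M - A1 + A2 *m B + D)
    <= Num.sqrt (1 + (400%:R + K) * delta ^+ 2).
Proof.
have [L0_le L0sq_le L2_le L1_le] :=
  lemma13_parameter_bounds hL0 hL1 hL2 hL0small hv.
have c_ge0 : 0 <= 1 + (400%:R + K) * delta ^+ 2.
  by rewrite addr_ge0 // mulr_ge0 ?sqr_ge0 // addr_ge0 // ltW.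
apply: specnorm_le_sqrt => // x.
have Bx_ge0 := normsq_ge0 (B *m x); have A1x_ge0 := psd_addtr_dot_ge0 x hA1.
have -> : (1%:M - A1 + A2 *m B + D) *m x = x - A1 *m x + A2 *m (B *m x) + D *m x.
  by rewrite !mulmxDl mulNmx mul1mx mulmxA.
have -> : (1 + (400%:R + K) * delta ^+ 2) * normsq x =
    normsq x + 400 * (delta ^+ 2 * normsq x) + K * delta ^+ 2 * normsq x by ring.
apply: (normsq_update_le (v := A1^T *m x) (w := A2^T *m x) (b := B *m x)) => //.
- rewrite -mulmxDl; apply: le_trans (normsq_mulmx_addtr_le x hL0 hA1 nA1) _.
  by rewrite mulrC ler_wpM2l.
- by rewrite -mulmxBl; apply: normsq_mulmx_le.
- have -> : A2^T *m x - A1^T *m x = (A2 - A1)^T *m x by rewrite linearB mulmxBl.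
  exact: normsq_trmx_mulmx_le.
- exact: dot_mulmxr.
- by apply: le_trans (normsq_mulmx_le _ nA2) _; rewrite mulrC ler_wpM2l.
- by apply: le_trans (loewner_gram_normsq_le x hD2) _; rewrite mulrC ler_wpM2l.
- apply: le_trans (loewner_addtr_dot_le x hD1) _.
  by rewrite lerD2r mulrC ler_wpM2l ?addr_ge0 ?normsq_ge0.
Qed.
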